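(* Let $\mathbf{W}=\langle W;\to,\neg,{}^{+},{}^{-},1\rangle$ be a quasi-Wajsberg* algebra. Then for any $x,y\in W$: (1) $\neg x\to y=\neg y\to x$ and $x\to\neg y=y\to\neg x$; (2) $\neg(x\to y)=\neg x\to\neg y$; (3) $x\to x=y\to y$; (4) $\neg(x\to x)=x\to x$.
   Context: A quasi-Wajsberg* algebra is an algebra $\langle W;\to,\neg,{}^{+},{}^{-},1\rangle$ of type $\langle2,1,1,1,0\rangle$ such that for all $x,y,z\in W$: (QW*1) $x\to y=\neg y\to\neg x$; (QW*2) $(x\to 1)\to((y\to 1)\to z)=(y\to 1)\to((x\to 1)\to z)$; (QW*3) $(1\to x)\to 1=1$; (QW*4) $(z\to z)\to(x\to y)=x\to y$; (QW*5) $(1\to 1)\to x^{+}=((1\to 1)\to x)^{+}=(x\to 1)\to 1$ and $(1\to 1)\to x^{-}=((1\to 1)\to x)^{-}=(x\to\neg 1)\to\neg 1$; (QW*6) $x\to y=(y^{+}\to x^{-})\to(x^{+}\to y^{-})$; (QW*7) $\neg(x\to y)=y\to x$; (QW*8) $\neg\neg x=x$; (QW*9) $(x\to(\neg x\to y))^{+}=x^{+}\to(\neg x^{+}\to y^{+})$; (QW*10) $x\vee y=y\vee x$; (QW*11) $x\vee(y\vee z)=(x\vee y)\vee z$; (QW*12) $x\to(y\vee z)=(x\to y)\vee(x\to z)$; where $x\vee y:=((x^{+}\to y^{+})^{+}\to(\neg x)^{-})\to((y^{-}\to x^{-})^{-}\to x^{-})$. Conventions: ${}^+,{}^-$ bind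 tighter than $\neg$, which binds tighter than $\to$ (so $\neg x\to y$ means $(\neg x)\to y$). *)

Section QW.
Variable W : Type.
Variable imp : W -> W -> W.
Variable neg plus minus : W -> W.
Variable one : W.

Definition qw_join (x y : W) : W :=
  imp (imp (plus (imp (plus x) (plus y))) (minus (neg x)))
      (imp (minus (imp (minus y) (minus x))) (minus x)).

Definition is_quasi_wajsberg_star : Prop :=
  (forall x y, imp x y = imp (neg y) (neg x)) /\
  (forall x y z, imp (imp x one) (imp (imp y one) z)
                 = imp (imp y one) (imp (imp x one) z)) /\
  (forall x, imp (imp one x) one = one) /\
  (forall x y z, imp (imp z z) (imp x y) = imp x y) /\
  (forall x, imp (imp one one) (plus x) = plus (imp (imp one one) x) /\
             plus (imp (imp one one) x) = imp (imp x one) one) /\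
  (forall x, imp (imp one one) (minus x) = minus (imp (imp one one) x) /\
             minus (imp (imp one one) x) = imp (imp x (neg one)) (neg one)) /\
  (forall x y, imp x y = imp (imp (plus y) (minus x)) (imp (plus x) (minus y))) /\
  (forall x y, neg (imp x y) = imp y x) /\
  (forall x, neg (neg x) = x) /\
  (forall x y, plus (imp x (imp (neg x) y))
               = imp (plus x) (imp (neg (plus x)) (plus y))) /\
  (forall x y, qw_join x y = qw_join y x) /\
  (forall x y z, qw_join x (qw_join y z) = qw_join (qw_join x y) z) /\
  (forall x y z, imp x (qw_join y z) = qw_join (imp x y) (imp x z)).
End QW.


(* Every z -> z is a left identity for implications (QW*4), and negation
   reverses implications (QW*7); so x -> x and y -> y absorb each other from
   either side, hence coincide. *)

Section ImplicationNegation.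

Variable W : Type.
Variable imp : W -> W -> W.
Variable neg : W -> W.

Hypothesis imp_contra : forall x y, imp x y = imp (neg y) (neg x).
Hypothesis neg_imp_rev : forall x y, neg (imp x y) = imp y x.
Hypothesis negK : forall x, neg (neg x) = x.

Lemma imp_negl_sym (x y : W) : imp (neg x) y = imp (neg y) x.
Proof. rewrite imp_contra, negK. reflexivity. Qed.

Lemma imp_negr_sym (x y : W) : imp x (neg y) = imp y (neg x).
Proof. rewrite imp_contra, negK. reflexivity. Qed.

Lemma neg_imp (x y : W) : neg (imp x y) = imp (neg x) (neg y).
Proof. rewrite neg_imp_rev, imp_contra. reflexivity. Qed.

Lemma neg_imp_self (x : W) : neg (imp x x) = imp x x.
Proof. apply neg_imp_rev. Qed.

Hypothesis imp_self_idl : forall x y z, imp (imp z z) (imp x y) = imp x y.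

Lemma imp_self_const (x y : W) : imp x x = imp y y.
Proof.
  rewrite <- (imp_self_idl x x y), <- neg_imp_rev.
  rewrite imp_self_idl, neg_imp_self. reflexivity.
Qed.

End ImplicationNegation.

Theorem proposition3p1 (W : Type) (imp : W -> W -> W) (neg plus minus : W -> W) (one : W) :
  is_quasi_wajsberg_star W imp neg plus minus one ->
  forall x y : W,
    (imp (neg x) y = imp (neg y) x /\ imp x (neg y) = imp y (neg x)) /\
    neg (imp x y) = imp (neg x) (neg y) /\
    imp x x = imp y y /\
    neg (imp x x) = imp x x.
Proof.
  intros [contra [_ [_ [self_idl [_ [_ [_ [rev [negK _]]]]]]]]] x y.
  split; [split | split; [| split]].
  - apply imp_negl_sym; assumption.
  - apply imp_negr_sym; assumption.
  - apply neg_imp; assumption.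
  - apply imp_self_const with neg; assumption.
  - apply neg_imp_self; assumption.
Qed.
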